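(* Let $m$ be a positive integer, $q=3^m$, $n=q-1$, and let $e$ be an integer with $1<e<q-1$, $e\notin C_1$ and $\ell_e=|C_e|=m$. Then the ternary cyclic code $\mathcal{C}_{(1,e)}$ has parameters $[3^m-1,\,3^m-1-2m,\,4]$ if and only if all of the following hold: (C1) $e$ is even; (C2) the equation $(x+1)^e+x^e+1=0$ has the only solution $x=1$ in $\mathrm{GF}(q)^*$; (C3) the equation $(x+1)^e-x^e-1=0$ has the only solution $x=0$ in $\mathrm{GF}(q)$.
   Context: For $j\in\mathbb{Z}_n$, $C_j=\{j,3j,3^2j,\dots,3^{\ell_j-1}j\}$ (mod $n$) is the $3$-cyclotomic coset modulo $n=3^m-1$ containing $j$, with $\ell_j$ the smallest positive integer such that $3^{\ell_j}j\equiv j\pmod n$. Let $\alpha$ be a generator of $\mathrm{GF}(q)^*$ and $m_a(x)$ the minimal polynomial of $a\in\mathrm{GF}(q)$ over $\mathrm{GF}(3)$. For $1<e<q-1$ with $e\notin C_1$, $\mathcal{C}_{(1,e)}$ denotes the cyclic code of length $n$ over $\mathrm{GF}(3)$ with generator polynomial $m_{\alpha}(x)m_{\alpha^e}(x)$. A code with parameters $[n,k,d]$ has length $n$, dimension $k$ and minimum Hamming distance $d$. *)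

From HB Require Import structures.
From mathcomp Require Import all_boot all_order all_algebra all_field.
Set Implicit Arguments. Unset Strict Implicit. Unset Printing Implicit Defensive.
Import GRing.Theory.
Local Open Scope ring_scope.

(* 3-cyclotomic coset of j modulo n: { j * 3^i mod n : i >= 0 }.
   Since 3 is invertible mod n = 3^m - 1 with order m <= n, ranging i over
   0 .. n-1 covers all of it. *)
Definition cyc_coset3 (n j : nat) : seq nat :=
  undup [seq (j * 3 ^ i) %% n | i <- iota 0 n]%N.

(* canonical embedding of GF(3) into a field F (a ring morphism when char F = 3) *)
Definition emb3 (F : finFieldType) (c : 'F_3) : F := (nat_of_ord c)%:R.

Definition is_minpoly3 (F : finFieldType) (a : F) (p : {poly 'F_3}) : Prop :=
  [/\ p \is monic, root (map_poly (@emb3 F) p) a &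
      forall r : {poly 'F_3}, r != 0 -> root (map_poly (@emb3 F) r) a ->
        (size p <= size r)%N].

Definition word_poly (n : nat) (c : 'rV['F_3]_n) : {poly 'F_3} :=
  \sum_(i < n) (c 0 i)%:P * 'X^i.

Definition cyclic_code (n : nat) (g : {poly 'F_3}) : {set 'rV['F_3]_n} :=
  [set c : 'rV['F_3]_n | g %| word_poly c].

Definition hamming_dist (n : nat) (c1 c2 : 'rV['F_3]_n) : nat :=
  #|[pred i : 'I_n | c1 0 i != c2 0 i]|.

Definition has_params (n : nat) (C : {set 'rV['F_3]_n}) (k d : nat) : Prop :=
  [/\ #|C| = (3 ^ k)%N,
      (exists c1, exists c2, [/\ c1 \in C, c2 \in C, c1 != c2 & hamming_dist c1 c2 = d]) &
      (forall c1 c2, c1 \in C -> c2 \in C -> c1 != c2 -> (d <= hamming_dist c1 c2)%N)].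

From HB Require Import structures.
From mathcomp Require Import all_boot all_order all_algebra all_field.
From mathcomp Require Import zify ring.
Import GRing.Theory.
Local Open Scope ring_scope.
Set Implicit Arguments. Unset Strict Implicit.

(* The minimal polynomials p1 and pe have degree m: a polynomial over GF(3)
   vanishing at x vanishes at the Frobenius conjugates x^(3^i), which are m
   distinct points (the cyclotomic cosets have size m), and pigeonhole on the
   3^(m+1) polynomials of degree at most m gives the converse bound.  As e is
   not in C_1 the two sets of conjugates are disjoint, so the code is
   {c | c(alpha) = c(beta) = 0} and has dimension n - 2m.

   A codeword of weight w <= 3 has coefficients +-1, so it is a relation
   sum a_i x_i = sum a_i x_i^e = 0 between w distinct powers x_i of alpha with
   signs a_i.  For w = 2 and e even this forces x_1 = x_2; for w = 3 two of the
   signs agree and dividing by one of the corresponding points turns the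
   relation into the equation of (C2) or (C3).  Conversely an odd e gives the
   codeword 1 + X^(n/2), since alpha^(n/2) = -1, and an unwanted solution of
   (C2) or (C3) gives a codeword of weight 3.  Finally d <= 4 by pigeonhole:
   there are more than 3^(2m) words of weight at most 2, but only 3^(2m)
   syndromes (c(alpha), c(beta)). *)

Lemma card_lt_collision (T T' : finType) (g : T -> T') :
  (#|T'| < #|T|)%N -> exists x, exists2 y, x != y & g x = g y.
Proof.
move=> lt; apply/injectivePn; apply: contraTN lt => /injectiveP/leq_card.
by rewrite leqNgt.
Qed.

Lemma natr_mod3 (R : pzSemiRingType) (R_char3 : 3%:R = 0 :> R) k :
  (k %% 3)%:R = k%:R :> R.
Proof. by rewrite {2}(divn_eq k 3) natrD natrM R_char3 mulr0 add0r. Qed.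

(* [emb3] is additive and multiplicative only in characteristic 3; this alias
   carries that hypothesis so that the ring morphism structure can be declared. *)
Definition emb3r (F : finFieldType) of 3%:R = 0 :> F := @emb3 F.

Lemma emb3r_is_nmod_morphism F F_char3 : nmod_morphism (@emb3r F F_char3).
Proof.
split=> // x y; rewrite /emb3r /emb3 -natrD -(natr_mod3 F_char3 (x + y)).
by congr (_ %:R).
Qed.

Lemma emb3r_is_monoid_morphism F F_char3 : monoid_morphism (@emb3r F F_char3).
Proof.
split=> // x y; rewrite /emb3r /emb3 -natrM -(natr_mod3 F_char3 (x * y)).
by congr (_ %:R).
Qed.

HB.instance Definition _ F F_char3 :=
  GRing.isNmodMorphism.Build _ _ (@emb3r F F_char3) (emb3r_is_nmod_morphism F_char3).
HB.instance Definition _ F F_char3 :=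
  GRing.isMonoidMorphism.Build _ _ (@emb3r F F_char3) (emb3r_is_monoid_morphism F_char3).

Section WordPoly.
Variable k : nat.
Implicit Types c : 'rV['F_3]_k.

Lemma coef_word_poly c (i : 'I_k) : (word_poly c)`_i = c 0 i.
Proof.
rewrite /word_poly coef_sum (bigD1 i) //= coefCM coefXn eqxx mulr1 big1 ?addr0 //.
by move=> j ji; rewrite coefCM coefXn val_eqE eq_sym (negbTE ji) mulr0.
Qed.

Lemma size_word_poly c : (size (word_poly c) <= k)%N.
Proof.
apply/leq_sizeP => j hj; rewrite /word_poly coef_sum big1 // => i _.
by rewrite coefCM coefXn gtn_eqF ?mulr0 // (leq_trans (ltn_ord i)).
Qed.

Lemma word_polyD c1 c2 : word_poly (c1 + c2) = word_poly c1 + word_poly c2.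
Proof.
by rewrite /word_poly -big_split; apply: eq_bigr => i _; rewrite !mxE polyCD mulrDl.
Qed.

Lemma word_polyB c1 c2 : word_poly (c1 - c2) = word_poly c1 - word_poly c2.
Proof.
by rewrite /word_poly -sumrB; apply: eq_bigr => i _; rewrite !mxE polyCB mulrBl.
Qed.

Lemma word_poly0 : word_poly (0 : 'rV['F_3]_k) = 0.
Proof. by rewrite /word_poly big1 // => i _; rewrite mxE mul0r. Qed.

Lemma word_poly_eq0 c : (word_poly c == 0) = (c == 0).
Proof.
apply/eqP/eqP => [c0|->]; last exact: word_poly0.
by apply/rowP => i; rewrite mxE -coef_word_poly c0 coef0.
Qed.

Lemma word_poly_row (P : {poly 'F_3}) :
  (size P <= k)%N -> word_poly (\row_(i < k) P`_i) = P.
Proof.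
move=> sP; apply/polyP => j; case: (ltnP j k) => jk.
  by rewrite (coef_word_poly _ (Ordinal jk)) mxE.
by rewrite !nth_default // ?(leq_trans sP) ?(leq_trans (size_word_poly _)).
Qed.

Definition unit_word (i : nat) (a : 'F_3) : 'rV['F_3]_k :=
  \row_(l < k) if l == i :> nat then a else 0.

Lemma word_poly_unit i a : (i < k)%N -> word_poly (unit_word i a) = a%:P * 'X^i.
Proof.
move=> ik; rewrite /word_poly (bigD1 (Ordinal ik)) //= mxE eqxx big1 ?addr0 //.
by move=> l /negbTE; rewrite mxE -val_eqE /= => ->; rewrite mul0r.
Qed.

Definition wt c := #|[set i | c 0 i != 0]|.

Lemma hamming_dist_wt c1 c2 : hamming_dist c1 c2 = wt (c1 - c2).
Proof. by apply: eq_card => i; rewrite !inE !mxE subr_eq0. Qed.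

Lemma wt_eq0 c : (wt c == 0%N) = (c == 0).
Proof.
rewrite cards_eq0; apply/eqP/eqP => [c0|->]; last by apply/setP => i; rewrite !inE mxE eqxx.
apply/rowP => i; rewrite mxE; apply/eqP/negPn/negP => ci.
by have := in_set0 i; rewrite -c0 inE ci.
Qed.

Lemma wtN c : wt (- c) = wt c.
Proof. by apply: eq_card => i; rewrite !inE mxE oppr_eq0. Qed.

Lemma wtD c1 c2 : (wt (c1 + c2) <= wt c1 + wt c2)%N.
Proof.
rewrite /wt; set A := [set i | c1 0 i != 0]; set B := [set i | c2 0 i != 0].
apply: leq_trans (leq_subr #|A :&: B| _); rewrite -cardsU.
apply: subset_leq_card; apply/subsetP => i; rewrite !inE mxE -negb_and.
by apply: contra => /andP [/eqP-> /eqP->]; rewrite addr0.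
Qed.

Lemma wt_unit_word i a : (wt (unit_word i a) <= 1)%N.
Proof.
apply/card_le1_eqP => l1 l2; rewrite !inE !mxE.
have supp (l : 'I_k) : (if l == i :> nat then a else 0) != 0 -> l = i :> nat.
  by case: ifP => [/eqP|_] //; rewrite eqxx.
by move=> /supp h1 /supp h2; apply: val_inj; rewrite /= h1 h2.
Qed.

End WordPoly.

Lemma card_cyclic_code k (g : {poly 'F_3}) : g != 0 -> (size g <= k.+1)%N ->
  #|cyclic_code k g| = (3 ^ (k.+1 - size g))%N.
Proof.
move=> g_neq0 size_g; set d := (k.+1 - size g)%N.
pose enc (w : 'rV['F_3]_d) : 'rV['F_3]_k := \row_(i < k) (g * word_poly w)`_i.
have enc_poly w : word_poly (enc w) = g * word_poly w.
  rewrite word_poly_row //; apply: leq_trans (size_mul_leq _ _) _.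
  by have := size_word_poly w; rewrite /d; lia.
have enc_inj : injective enc.
  move=> w1 w2 /(congr1 (@word_poly k)); rewrite !enc_poly => /(mulfI g_neq0).
  by move/eqP; rewrite -subr_eq0 -word_polyB word_poly_eq0 subr_eq0 => /eqP.
suff -> : cyclic_code k g = enc @: setT.
  by rewrite card_imset // cardsT card_mx card_Fp // mul1n.
apply/setP => c; rewrite inE; apply/idP/imsetP => [/dvdpP [q def_c]|[w _ ->]].
  have size_q : (size q <= d)%N.
    have [->|q0] := eqVneq q 0; first by rewrite size_poly0.
    have := size_word_poly c; rewrite def_c size_mul //.
    by rewrite /d; set s := size q; set t := size g; lia.
  exists (\row_(i < d) q`_i); first by rewrite inE.
  by apply/rowP => i; rewrite mxE word_poly_row // mulrC -def_c coef_word_poly.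
by rewrite enc_poly dvdp_mulIl.
Qed.


Section Char3.
Variable F : finFieldType.
Hypothesis F_pchar3 : (3 \in [pchar F])%N.

Local Notation f := (emb3r (pcharf0 F_pchar3)).
Local Notation ev r x := ((map_poly f r).[x]).

Lemma emb3r_cube a : f a ^+ 3 = f a.
Proof. by rewrite -rmorphXn; congr (f _); case: a => [[|[|[|k]]] Ha]; apply: val_inj. Qed.

Lemma emb3r_sqr a : a != 0 -> f a ^+ 2 = 1.
Proof.
rewrite -rmorphXn -(rmorph1 f) => a0; congr (f _).
by move: a0; case: a => [[|[|[|k]]] Ha] //= _; apply: val_inj.
Qed.

Lemma horner_frobenius r x : ev r (x ^+ 3) = ev r x ^+ 3.
Proof.
rewrite -[RHS](horner_map (pFrobenius_aut F_pchar3)) /= -map_poly_comp.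
by congr (_.[_]); apply: eq_map_poly => a /=; rewrite pFrobenius_autE emb3r_cube.
Qed.

Lemma root_frobeniusX r x i : root (map_poly f r) x -> root (map_poly f r) (x ^+ (3 ^ i)).
Proof.
move=> /rootP rx; apply/rootP; elim: i => [|i IH]; first by rewrite expr1.
by rewrite expnSr exprM horner_frobenius IH expr0n.
Qed.

Lemma horner_word_poly k (c : 'rV['F_3]_k) x :
  ev (word_poly c) x = \sum_(i < k) f (c 0 i) * x ^+ i.
Proof.
rewrite /word_poly rmorph_sum horner_sum; apply: eq_bigr => i _.
by rewrite rmorphM /= map_polyC map_polyXn hornerCM hornerXn.
Qed.

Lemma horner_unit_word k i a x :
  (i < k)%N -> ev (word_poly (unit_word k i a)) x = f a * x ^+ i.
Proof.
by move=> ik; rewrite word_poly_unit // rmorphM /= map_polyC map_polyXn hornerCM hornerXn.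
Qed.

Section MinPoly.
Variables (a : F) (p : {poly 'F_3}).
Hypothesis p_min : is_minpoly3 a p.

Lemma minpoly3_root : root (map_poly f p) a.
Proof. by case: p_min. Qed.

Lemma minpoly3_dvd r : root (map_poly f r) a -> p %| r.
Proof.
case: p_min => p_monic _ p_least ra; apply/modp_eq0P/eqP/negPn/negP => r_mod_p.
have : root (map_poly f (r %% p)) a.
  have -> : r %% p = r - r %/ p * p by rewrite {2}(divp_eq r p) addrAC subrr add0r.
  rewrite rmorphB rmorphM /= rootE !hornerE.
  by rewrite (rootP minpoly3_root) (rootP ra) mulr0 subr0.
move/(p_least _ r_mod_p); rewrite leqNgt ltn_modp monic_neq0 //.
Qed.

Lemma minpoly3_size_le k : #|F| = (3 ^ k)%N -> (size p <= k.+1)%N.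
Proof.
case: p_min => _ _ p_least cardF.
have [v [w vw ev_vw]] : exists v : 'rV['F_3]_k.+1, exists2 w, v != w &
    ev (word_poly v) a = ev (word_poly w) a.
  by apply: card_lt_collision; rewrite card_mx card_Fp // mul1n cardF ltn_exp2l.
have vw0 : word_poly (v - w) != 0 by rewrite word_poly_eq0 subr_eq0.
apply: leq_trans (size_word_poly (v - w)); apply: p_least vw0 _.
suff : root (map_poly f (word_poly (v - w))) a by [].
by rewrite /root word_polyB rmorphB /= hornerD hornerN ev_vw subrr.
Qed.

Lemma minpoly3_size_gt (rs : seq F) :
  uniq rs -> all (root (map_poly f p)) rs -> (size rs < size p)%N.
Proof.
case: p_min => p_monic _ _ urs ars; rewrite -(size_map_poly f p).
by apply: max_poly_roots => //; rewrite map_poly_eq0 monic_neq0.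
Qed.

End MinPoly.
End Char3.

Section SignedRelations.
Variables (F : fieldType) (e : nat).

Lemma sqr1_neq (s t : F) : s ^+ 2 = 1 -> t ^+ 2 = 1 -> s != t -> t = - s.
Proof.
move=> /eqP; rewrite sqrf_eq1 => /orP [] /eqP-> /eqP; rewrite sqrf_eq1.
  by case/orP=> /eqP->; rewrite ?eqxx.
by case/orP=> /eqP->; rewrite ?opprK ?eqxx.
Qed.

Hypothesis e_even : ~~ odd e.

Lemma expr_even_sqr1 (s : F) : s ^+ 2 = 1 -> s ^+ e = 1.
Proof. by move=> s2; rewrite -(odd_double_half e) (negbTE e_even) -mul2n exprM s2 expr1n. Qed.

Lemma exprN_even (x : F) : (- x) ^+ e = x ^+ e.
Proof. by rewrite exprNn (expr_even_sqr1 (s := -1)) ?mul1r // sqrrN expr1n. Qed.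

Lemma signed_pair_eq (x y a b : F) : x != 0 -> a ^+ 2 = 1 -> b ^+ 2 = 1 ->
  a * x + b * y = 0 -> a * x ^+ e + b * y ^+ e = 0 -> x = y.
Proof.
move=> x0 a2 b2 rel1 rele.
have def_y : y = - (a * b) * x.
  have by_ : b * y = - (a * x) by apply/eqP; rewrite -addr_eq0 addrC rel1.
  by rewrite -[y]mul1r -b2 expr2 -mulrA by_; ring.
have ye : y ^+ e = x ^+ e.
  by rewrite def_y exprMn (expr_even_sqr1 (s := - (a * b))) ?mul1r // sqrrN exprMn a2 b2 mul1r.
have def_b : b = - a.
  apply/eqP; rewrite -addr_eq0 addrC; move: rele; rewrite ye -mulrDl => /eqP.
  by rewrite mulf_eq0 expf_eq0 (negbTE x0) andbF orbF.
by rewrite def_y def_b mulrN opprK -expr2 a2 mul1r.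
Qed.

Hypothesis C2 : forall x : F, x != 0 -> (x + 1) ^+ e + x ^+ e + 1 = 0 -> x = 1.
Hypothesis C3 : forall x : F, (x + 1) ^+ e - x ^+ e - 1 = 0 -> x = 0.

(* Normalizing by [y], the relation becomes (C2) or (C3) for [x / y]
   according to the sign of [a * c]. *)
Lemma signed_triple_eq (x y z a c : F) : x != 0 -> y != 0 ->
  a ^+ 2 = 1 -> c ^+ 2 = 1 ->
  a * x + a * y + c * z = 0 -> a * x ^+ e + a * y ^+ e + c * z ^+ e = 0 -> x = y.
Proof.
move=> x0 y0 a2 c2 rel1 rele.
set s := a * c.
have s2 : s ^+ 2 = 1 by rewrite exprMn a2 c2 mul1r.
have aa : a * a = 1 by rewrite -expr2.
have rel1' : x + y + s * z = 0.
  transitivity (a * (a * x + a * y + c * z)); last by rewrite rel1 mulr0.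
  by rewrite !mulrDr !mulrA aa !mul1r.
have rele' : x ^+ e + y ^+ e + s * z ^+ e = 0.
  transitivity (a * (a * x ^+ e + a * y ^+ e + c * z ^+ e)); last by rewrite rele mulr0.
  by rewrite !mulrDr !mulrA aa !mul1r.
have ze : z ^+ e = (x + y) ^+ e.
  have sz : s * z = - (x + y) by apply/eqP; rewrite -subr_eq0 opprK addrC rel1'.
  by rewrite -(exprN_even (x + y)) -sz exprMn (expr_even_sqr1 (s := s)) // mul1r.
set t := x / y.
have def_x : x = t * y by rewrite /t divfK.
have t0 : t != 0 by apply: contraNneq x0; rewrite def_x => ->; rewrite mul0r.
have rel_t : t ^+ e + 1 + s * (t + 1) ^+ e = 0.
  have : (t ^+ e + 1 + s * (t + 1) ^+ e) * y ^+ e = 0.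
    rewrite -rele' ze def_x (_ : t * y + y = (t + 1) * y); last by rewrite mulrDl mul1r.
    by rewrite !exprMn !mulrDl mul1r mulrA.
  by move/eqP; rewrite mulf_eq0 expf_eq0 (negbTE y0) andbF orbF => /eqP.
clearbody s t; move/eqP: s2; rewrite sqrf_eq1 => /orP [] /eqP s_sign.
  by rewrite def_x (C2 t0) ?mul1r // -rel_t s_sign; ring.
by move: t0; rewrite (C3 (x := t)) ?eqxx // -oppr0 -rel_t s_sign; ring.
Qed.

(* Two of the three signs agree, and the corresponding points then coincide. *)
Lemma no_signed_triple (x y z a b c : F) : x != 0 -> y != 0 -> z != 0 ->
  x != y -> x != z -> y != z ->
  a ^+ 2 = 1 -> b ^+ 2 = 1 -> c ^+ 2 = 1 ->
  a * x + b * y + c * z = 0 -> a * x ^+ e + b * y ^+ e + c * z ^+ e = 0 -> False.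
Proof.
move=> x0 y0 z0 xy xz yz a2 b2 c2 rel1 rele.
have [ab|ab] := eqVneq a b.
  by subst b; move: xy; rewrite (signed_triple_eq x0 y0 a2 c2 rel1 rele) eqxx.
have [ac|ac] := eqVneq a c.
  subst c; move: xz; rewrite (signed_triple_eq x0 z0 a2 b2 (y := z) (z := y)) ?eqxx //.
    by rewrite -rel1; ring.
  by rewrite -rele; ring.
have bc : b = c by rewrite (sqr1_neq a2 b2 ab) (sqr1_neq a2 c2 ac).
rewrite -bc in rel1 rele; move: yz.
rewrite (signed_triple_eq y0 z0 b2 a2 (z := x)) ?eqxx //.
  by rewrite -rel1; ring.
by rewrite -rele; ring.
Qed.

End SignedRelations.

Section CyclicCode.
Variables (m : nat) (F : finFieldType) (alpha : F) (e : nat) (p1 pe : {poly 'F_3}).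
Hypotheses (m_gt0 : (0 < m)%N) (cardF : #|F| = (3 ^ m)%N).
Local Notation n := (3 ^ m - 1)%N.
Hypotheses (alpha_prim : n.-primitive_root alpha)
  (e_gt1 : (1 < e)%N) (e_lt_n : (e < n)%N)
  (e_notin_C1 : e \notin cyc_coset3 n 1) (size_Ce : size (cyc_coset3 n e) = m)
  (p1_min : is_minpoly3 alpha p1) (pe_min : is_minpoly3 (alpha ^+ e) pe).

Let F_pchar3 : (3 \in [pchar F])%N := card_finPcharP cardF isT.
Local Notation f := (emb3r (pcharf0 F_pchar3)).
Local Notation ev r x := ((map_poly f r).[x]).
Local Notation beta := (alpha ^+ e).
Local Notation C := (cyclic_code n (p1 * pe)).
Implicit Types c : 'rV['F_3]_n.

Lemma n_ge3 : (3 <= n)%N.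
Proof. exact: leq_trans e_lt_n. Qed.

Lemma n_gt0 : (0 < n)%N.
Proof. exact: leq_trans n_ge3. Qed.

Lemma m_le_n : (m <= n)%N.
Proof. by have := ltn_expl m (isT : (1 < 3)%N); lia. Qed.

Lemma expr_alpha_inj i j : (i < n)%N -> (j < n)%N -> alpha ^+ i = alpha ^+ j -> i = j.
Proof. by move=> lt_i lt_j /eqP; rewrite (eq_prim_root_expr alpha_prim) !modn_small // => /eqP. Qed.

Lemma expr_alpha_neq0 i : alpha ^+ i != 0.
Proof.
apply: expf_neq0; apply: contra_eq_neq (prim_expr_order alpha_prim) => ->.
by rewrite expr0n eqn0Ngt n_gt0 eq_sym oner_eq0.
Qed.

Lemma expr_alpha_surj (x : F) : x != 0 -> exists i : 'I_n, x = alpha ^+ i.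
Proof.
move=> x0; have xn : x ^+ n = 1.
  apply: (mulfI x0); rewrite -exprS mulr1 (_ : n.+1 = #|F|) ?expf_card //.
  by rewrite cardF; have := expn_gt0 3 m; lia.
by have [i ->] := prim_rootP alpha_prim xn; exists i.
Qed.

Lemma expn3_lt i : (i < m)%N -> (3 ^ i < n)%N.
Proof.
move=> im; have : (3 ^ i.+1 <= 3 ^ m)%N by rewrite leq_exp2l.
by rewrite expnS; have := expn_gt0 3 i; lia.
Qed.

Lemma expn3_mod t : (3 ^ t = 3 ^ (t %% m) %[mod n])%N.
Proof.
have expn3m : (3 ^ m = 1 %[mod n])%N.
  by rewrite {1}(esym (@subnK 1 (3 ^ m) (expn_gt0 _ _))) modnDl.
rewrite {1}(divn_eq t m) expnD (mulnC (t %/ m)%N) expnM -modnMml -modnXm expn3m.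
by rewrite modnXm exp1n modnMml mul1n.
Qed.

Definition conj1 : seq F := [seq alpha ^+ (3 ^ i) | i <- iota 0 m].
Definition conjE : seq F := [seq alpha ^+ k | k <- cyc_coset3 n e].

Lemma mem_cosetE_lt k : k \in cyc_coset3 n e -> (k < n)%N.
Proof. by rewrite mem_undup => /mapP [i _ ->]; rewrite ltn_pmod // n_gt0. Qed.

Lemma uniq_conj1 : uniq conj1.
Proof.
rewrite map_inj_in_uniq ?iota_uniq // => i j; rewrite !mem_iota => /andP [_ hi] /andP [_ hj].
by move/(expr_alpha_inj (expn3_lt hi) (expn3_lt hj)); apply: expnI.
Qed.

Lemma uniq_conjE : uniq conjE.
Proof.
rewrite map_inj_in_uniq ?undup_uniq // => i j hi hj.
exact: expr_alpha_inj (mem_cosetE_lt hi) (mem_cosetE_lt hj).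
Qed.

Lemma conjE_frobenius x : x \in conjE -> exists i, x = beta ^+ (3 ^ i).
Proof.
case/mapP => k; rewrite mem_undup => /mapP [i _ ->] ->.
by exists i; rewrite (expr_mod _ (prim_expr_order alpha_prim)) -exprM.
Qed.

Lemma roots_conj1 r : root (map_poly f r) alpha -> all (root (map_poly f r)) conj1.
Proof. by move=> ra; apply/allP => x /mapP [i _ ->]; apply: root_frobeniusX. Qed.

Lemma roots_conjE r : root (map_poly f r) beta -> all (root (map_poly f r)) conjE.
Proof. by move=> rb; apply/allP => x /conjE_frobenius [i ->]; apply: root_frobeniusX. Qed.

Lemma size_minpoly_conj a p (conj : seq F) : is_minpoly3 a p -> uniq conj ->
  size conj = m -> (forall r, root (map_poly f r) a -> all (root (map_poly f r)) conj) ->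
  size p = m.+1.
Proof.
move=> p_min u_conj size_conj roots_conj; apply/eqP; rewrite eqn_leq.
rewrite (minpoly3_size_le F_pchar3 p_min cardF) -size_conj.
by rewrite (minpoly3_size_gt p_min u_conj) // roots_conj // minpoly3_root.
Qed.

Lemma size_p1 : size p1 = m.+1.
Proof. by apply: size_minpoly_conj p1_min uniq_conj1 _ roots_conj1; rewrite size_map size_iota. Qed.

Lemma size_pe : size pe = m.+1.
Proof. by apply: size_minpoly_conj pe_min uniq_conjE _ roots_conjE; rewrite size_map. Qed.

(* Multiplying by 3^(jm - j), the inverse of 3^j modulo n, would put e in C_1. *)
Lemma expn3_notin_cosetE i j : (3 ^ i %% n)%N != (e * 3 ^ j %% n)%N.
Proof.
apply: contra e_notin_C1 => /eqP eq_ij; rewrite mem_undup; apply/mapP.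
exists ((i + (j * m - j)) %% m)%N; first by rewrite mem_iota (leq_trans (ltn_pmod _ m_gt0) m_le_n).
have jm : (j <= j * m)%N by rewrite leq_pmulr.
rewrite mul1n -expn3_mod expnD -modnMml eq_ij modnMml -mulnA -expnD subnKC //.
by rewrite -modnMmr expn3_mod modnMl expn0 modnMmr muln1 modn_small.
Qed.

(* The 2m conjugates of alpha and beta are distinct, while p1 has only m roots. *)
Lemma p1_beta_neq0 : ~~ root (map_poly f p1) beta.
Proof.
apply/negP => p1_beta.
have u : uniq (conj1 ++ conjE).
  rewrite cat_uniq uniq_conj1 uniq_conjE andbT; apply/hasPn => x /conjE_frobenius [j ->].
  apply/negP => /mapP [i]; rewrite mem_iota => /andP [_ hi].
  rewrite -exprM -(expr_mod _ (prim_expr_order alpha_prim)).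
  move=> /(expr_alpha_inj (ltn_pmod _ n_gt0) (expn3_lt hi)) eq_ij.
  by move: (expn3_notin_cosetE i j); rewrite eq_ij modn_small ?expn3_lt // eqxx.
have := minpoly3_size_gt (F_pchar3 := F_pchar3) p1_min u.
rewrite all_cat roots_conj1 ?minpoly3_root //.
by rewrite roots_conjE // size_cat !size_map size_iota size_Ce size_p1 => /(_ isT); lia.
Qed.

Lemma char3_three : 1 + 1 + 1 = 0 :> F.
Proof. by rewrite -(pcharf0 F_pchar3) !mulrS mulr0n addr0 addrA. Qed.

Lemma char3_two : 1 + 1 = -1 :> F.
Proof. by apply/eqP; rewrite -subr_eq0 opprK char3_three. Qed.

Lemma mem_code c : (c \in C) = (ev (word_poly c) alpha == 0) && (ev (word_poly c) beta == 0).
Proof.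
rewrite inE; apply/idP/andP => [/dvdpP [q ->]|[c_alpha c_beta]].
  rewrite !rmorphM /= !hornerM (rootP (minpoly3_root _ p1_min)).
  by rewrite (rootP (minpoly3_root _ pe_min)) !(mulr0, mul0r).
have /dvdpP [q def_c] := minpoly3_dvd p1_min c_alpha.
have q_beta : root (map_poly f q) beta.
  move: c_beta; rewrite def_c rmorphM /= hornerM mulf_eq0 => /orP [//|p1b].
  by move: p1_beta_neq0; rewrite /root p1b.
have /dvdpP [r def_q] := minpoly3_dvd pe_min q_beta.
by rewrite def_c def_q -mulrA (mulrC pe) dvdp_mulIr.
Qed.

Lemma code0 : 0 \in C.
Proof. by rewrite inE word_poly0 dvdp0. Qed.

Lemma codeB c1 c2 : c1 \in C -> c2 \in C -> c1 - c2 \in C.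
Proof. by rewrite !inE word_polyB; apply: dvdp_sub. Qed.

Lemma size_generator : size (p1 * pe) = (2 * m).+1.
Proof.
rewrite size_mul ?size_p1 ?size_pe ?mul2n ?addnn //.
all: by rewrite -size_poly_eq0 ?size_p1 ?size_pe.
Qed.

Lemma card_code : #|C| = (3 ^ (n - 2 * m))%N.
Proof.
rewrite card_cyclic_code ?size_generator ?subSS //.
  by rewrite -size_poly_eq0 size_generator.
suff : (2 * m + 1 <= 3 ^ m)%N by lia.
by elim: (m) => // j IH; rewrite expnS; lia.
Qed.

Lemma horner_support c x :
  ev (word_poly c) x = \sum_(i in [set i | c 0 i != 0]) f (c 0 i) * x ^+ i.
Proof.
rewrite horner_word_poly (bigID (mem [set i | c 0 i != 0])) /= addrC big1 ?add0r //.
by move=> i; rewrite inE negbK => /eqP ->; rewrite rmorph0 mul0r.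
Qed.

Lemma expr_alpha_neq (i j : 'I_n) : i != j -> alpha ^+ i != alpha ^+ j.
Proof. by apply: contraNneq => /(expr_alpha_inj (ltn_ord i) (ltn_ord j)) /val_inj ->. Qed.

Lemma code_support_relations c : c \in C ->
  \sum_(i in [set i | c 0 i != 0]) f (c 0 i) * alpha ^+ i = 0 /\
  \sum_(i in [set i | c 0 i != 0]) f (c 0 i) * (alpha ^+ i) ^+ e = 0.
Proof.
rewrite mem_code !horner_support => /andP [/eqP s_alpha /eqP s_beta].
by split=> //; rewrite -[RHS]s_beta; apply: eq_bigr => i _; rewrite exprAC.
Qed.

Lemma code_wt_neq1 c : c \in C -> wt c != 1%N.
Proof.
case/code_support_relations => s_alpha _; apply/cards1P => -[i defA].
have : i \in [set i | c 0 i != 0] by rewrite defA set11.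
rewrite inE => /negbTE ci0; move: s_alpha; rewrite defA big_set1 => /eqP.
by rewrite mulf_eq0 (negbTE (expr_alpha_neq0 _)) orbF fmorph_eq0 ci0.
Qed.

Section Sufficiency.
Hypothesis C1 : ~~ odd e.

Lemma code_wt_neq2 c : c \in C -> wt c != 2%N.
Proof.
case/code_support_relations => s_alpha s_beta; apply/cards2P => -[i [j [ij defA]]].
have sqr_c l : l \in [set i | c 0 i != 0] -> f (c 0 l) ^+ 2 = 1.
  by rewrite inE => /emb3r_sqr.
have Ai : i \in [set i | c 0 i != 0] by rewrite defA !inE eqxx.
have Aj : j \in [set i | c 0 i != 0] by rewrite defA !inE eqxx orbT.
rewrite defA big_setU1 ?inE // big_set1 in s_alpha.
rewrite defA big_setU1 ?inE // big_set1 in s_beta.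
have := signed_pair_eq C1 (expr_alpha_neq0 i) (sqr_c i Ai) (sqr_c j Aj) s_alpha s_beta.
by apply/eqP; apply: expr_alpha_neq.
Qed.

Hypothesis C2 : forall x : F, x != 0 -> (x + 1) ^+ e + x ^+ e + 1 = 0 -> x = 1.
Hypothesis C3 : forall x : F, (x + 1) ^+ e - x ^+ e - 1 = 0 -> x = 0.

Lemma code_wt_neq3 c : c \in C -> wt c != 3%N.
Proof.
case/code_support_relations => s_alpha s_beta; apply/negP.
rewrite /wt; set A := [set i | c 0 i != 0] in s_alpha s_beta * => /eqP cardA.
have sqr_c l : l \in A -> f (c 0 l) ^+ 2 = 1 by rewrite inE => /emb3r_sqr.
have [i Ai] : exists i, i \in A by apply/card_gt0P; rewrite cardA.
have /cards2P [j [k [jk defAi]]] : #|A :\ i| == 2%N.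
  by move: cardA; rewrite (cardsD1 i) Ai add1n => [[->]].
have := setD1K Ai; rewrite defAi => defA.
have : j \in A :\ i by rewrite defAi !inE eqxx.
have : k \in A :\ i by rewrite defAi !inE eqxx orbT.
rewrite !in_setD1 => /andP [ki Ak] /andP [ji Aj].
have i_jk : i \notin [set j; k] by rewrite !inE negb_or ![i == _]eq_sym ji ki.
have j_k : j \notin [set k] by rewrite inE.
rewrite -defA big_setU1 // big_setU1 // big_set1 /= addrA in s_alpha.
rewrite -defA big_setU1 // big_setU1 // big_set1 /= addrA in s_beta.
apply: (no_signed_triple C1 C2 C3 (expr_alpha_neq0 i) (expr_alpha_neq0 j)
  (expr_alpha_neq0 k) _ _ (expr_alpha_neq jk) (sqr_c i Ai) (sqr_c j Aj) (sqr_c k Ak)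
  s_alpha s_beta).
all: by apply: expr_alpha_neq; rewrite eq_sym.
Qed.

Lemma wt_code_ge4 c : c \in C -> c != 0 -> (4 <= wt c)%N.
Proof.
move=> cC; rewrite -wt_eq0.
move: (code_wt_neq1 cC) (code_wt_neq2 cC) (code_wt_neq3 cC).
by case: (wt c) => [|[|[|[|k]]]].
Qed.

End Sufficiency.

Lemma n_half : (n./2 + n./2)%N = n.
Proof.
have n_even : ~~ odd n by rewrite oddB ?expn_gt0 // oddX orbT.
by rewrite addnn -[RHS](odd_double_half n) (negbTE n_even).
Qed.

Local Notation h := n./2.

Definition sgn3 (b : bool) : 'F_3 := if b then 1 else -1.

Definition half_word (off : nat) (o : option ('I_h * bool)) : 'rV['F_3]_n :=
  if o is Some (i, b) then unit_word n (off + i) (sgn3 b) else 0.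

(* (n + 1)^2 + 1 words of weight at most 2, one more than the number 3^(2m)
   of syndromes (c(alpha), c(beta)). *)
Definition test_word (d : option (option ('I_h * bool) * option ('I_h * bool))) :=
  if d is Some (o1, o2) then half_word 0 o1 + half_word h o2
  else unit_word n 0 1 + unit_word n 1 1.

Lemma half_word_out off o (l : 'I_n) :
  (l < off)%N || (off + h <= l)%N -> half_word off o 0 l = 0.
Proof.
case: o => [[i b]|] /= l_out; last by rewrite mxE.
rewrite mxE ifF //; apply/eqP => l_eq; move: l_out; rewrite l_eq.
by have := ltn_ord i; lia.
Qed.

Lemma half_word_inj off o o' : (off + h <= n)%N ->
  (forall l : 'I_n, (off <= l < off + h)%N -> half_word off o 0 l = half_word off o' 0 l) ->
  o = o'.
Proof.
move=> le_n E.
have pos (i : 'I_h) : (off + i < n)%N by rewrite (leq_trans _ le_n) // ltn_add2l.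
have E_at (i : 'I_h) : half_word off o 0 (Ordinal (pos i)) = half_word off o' 0 (Ordinal (pos i)).
  by apply: E; rewrite /= leq_addr ltn_add2l ltn_ord.
have sgn3_neq0 b : sgn3 b != 0 by case: b.
case: o o' E E_at => [[i b]|] [[i' b']|] // _ E_at.
- have := E_at i; rewrite !mxE /= eqxx eqn_add2l.
  have [/val_inj <-|_] := eqVneq (i : nat) i'; last by move/eqP; rewrite (negbTE (sgn3_neq0 b)).
  by case: b b' {E_at} => [] [] // /eqP.
- by have := E_at i; rewrite !mxE /= eqxx => /eqP; rewrite (negbTE (sgn3_neq0 b)).
- by have := E_at i'; rewrite !mxE /= eqxx => /eqP; rewrite eq_sym (negbTE (sgn3_neq0 b')).
Qed.

Lemma half_ge2 : (2 <= h)%N.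
Proof. by have := n_half; have := n_ge3; lia. Qed.

Lemma half_lt_n : (h < n)%N.
Proof. by have := half_ge2; have := n_half; lia. Qed.

Lemma expr_alpha_half : alpha ^+ h = -1.
Proof.
have : (alpha ^+ h) ^+ 2 == 1 by rewrite -exprM muln2 -addnn n_half prim_expr_order.
rewrite sqrf_eq1 => /orP [/eqP alpha_h1|/eqP //].
have := expr_alpha_inj half_lt_n n_gt0 (etrans alpha_h1 (esym (expr0 _))).
by have := half_ge2; lia.
Qed.

Lemma test_word_low o1 o2 (l : 'I_n) :
  (l < h)%N -> test_word (Some (o1, o2)) 0 l = half_word 0 o1 0 l.
Proof. by move=> lt_l; rewrite mxE (half_word_out o2) ?lt_l ?addr0. Qed.

Lemma test_word_high o1 o2 (l : 'I_n) :
  (h <= l)%N -> test_word (Some (o1, o2)) 0 l = half_word h o2 0 l.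
Proof. by move=> le_l; rewrite mxE (half_word_out o1) ?le_l ?orbT ?add0r. Qed.

Lemma test_word_None_neq o1 o2 : test_word None != test_word (Some (o1, o2)).
Proof.
apply/eqP => E; have E_at l := congr1 (fun w : 'rV_n => w 0 l) E.
have lt1 : (1 < n)%N by have := half_lt_n; have := half_ge2; lia.
move: (E_at (Ordinal n_gt0)) (E_at (Ordinal lt1)) => /=.
rewrite !test_word_low ?(leq_trans _ half_ge2) // !mxE /= addr0 add0r.
by case: o1 {E E_at} => [[[[|[|i]] hi] b]|] /=; rewrite ?mxE.
Qed.

Lemma test_word_inj : injective test_word.
Proof.
move=> [[o1 o2]|] [[o1' o2']|] E; last done.
- have E_at l := congr1 (fun w : 'rV_n => w 0 l) E.
  congr (Some (_, _)).
    apply: (half_word_inj (off := 0)) => [|l /andP [_ lt_l]]; first by have := n_half; lia.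
    by have := E_at l; rewrite !test_word_low.
  apply: (half_word_inj (off := h)) => [|l /andP [le_l _]]; first by rewrite n_half.
  by have := E_at l; rewrite !test_word_high.
- by move: (test_word_None_neq o1 o2); rewrite -E eqxx.
- by move: (test_word_None_neq o1' o2'); rewrite E eqxx.
Qed.

Lemma wt_test_word d : (wt (test_word d) <= 2)%N.
Proof.
have wt_half off o : (wt (half_word off o) <= 1)%N.
  case: o => [[i b]|]; first exact: wt_unit_word.
  by have /eqP-> : wt (0 : 'rV['F_3]_n) == 0%N by rewrite wt_eq0.
case: d => [[o1 o2]|]; apply: leq_trans (wtD _ _) _.
  by rewrite -[2%N]/(1 + 1)%N leq_add ?wt_half.
by rewrite -[2%N]/(1 + 1)%N leq_add ?wt_unit_word.
Qed.

Lemma exists_wt_le4 : exists c, [/\ c \in C, c != 0 & (wt c <= 4)%N].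
Proof.
pose syndrome d := (ev (word_poly (test_word d)) alpha, ev (word_poly (test_word d)) beta).
have [d1 [d2 d12 [syn1 synE]]] : exists d1, exists2 d2, d1 != d2 & syndrome d1 = syndrome d2.
  apply: card_lt_collision.
  have cardF' : #|F| = n.+1 by rewrite cardF subn1 prednK ?expn_gt0.
  rewrite card_prod cardF' !card_option card_prod !card_option card_prod card_ord card_bool.
  by rewrite muln2 -addnn n_half.
exists (test_word d1 - test_word d2); split.
- by rewrite mem_code word_polyB !rmorphB /= !hornerD !hornerN syn1 synE !subrr eqxx.
- by rewrite subr_eq0; apply: contra d12 => /eqP /test_word_inj ->.
- apply: leq_trans (wtD _ _) _; rewrite wtN.
  by rewrite -[4%N]/(2 + 2)%N leq_add ?wt_test_word.
Qed.

Section Necessity.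
Hypothesis min_wt : forall c, c \in C -> c != 0 -> (4 <= wt c)%N.

Lemma no_wt3_relation (i j k : nat) (a b c : 'F_3) :
  (i < n)%N -> (j < n)%N -> (k < n)%N -> i != j -> i != k -> a != 0 ->
  f a * alpha ^+ i + f b * alpha ^+ j + f c * alpha ^+ k = 0 ->
  f a * (alpha ^+ i) ^+ e + f b * (alpha ^+ j) ^+ e + f c * (alpha ^+ k) ^+ e = 0 ->
  False.
Proof.
move=> lt_i lt_j lt_k ij ik a0 rel1 rele.
set w := unit_word n i a + unit_word n j b + unit_word n k c.
have ev_w x : ev (word_poly w) x = f a * x ^+ i + f b * x ^+ j + f c * x ^+ k.
  by rewrite !word_polyD !rmorphD !hornerD !horner_unit_word.
have w_code : w \in C by rewrite mem_code !ev_w rel1 !(exprAC alpha e) rele eqxx.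
have w_neq0 : w != 0.
  apply/eqP => /(congr1 (fun w : 'rV_n => w 0 (Ordinal lt_i))).
  by rewrite !mxE /= eqxx (negbTE ij) (negbTE ik) !addr0 => /eqP; rewrite (negbTE a0).
have : (wt w <= 3)%N.
  apply: leq_trans (wtD _ _) _; rewrite -[3%N]/(2 + 1)%N leq_add ?wt_unit_word //.
  by apply: leq_trans (wtD _ _) _; rewrite -[2%N]/(1 + 1)%N leq_add ?wt_unit_word.
by have := min_wt w_code w_neq0; lia.
Qed.

Lemma min_wt4_even : ~~ odd e.
Proof.
apply/negP => e_odd.
have h_neq0 : (0 != h)%N by have := half_ge2; lia.
apply: (no_wt3_relation n_gt0 half_lt_n half_lt_n h_neq0 h_neq0 (oner_neq0 _) (b := 1) (c := 0)).
  by rewrite rmorph1 rmorph0 mul0r addr0 !mul1r expr0 expr_alpha_half subrr.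
by rewrite rmorph1 rmorph0 mul0r addr0 !mul1r expr0 expr1n expr_alpha_half -signr_odd e_odd subrr.
Qed.

Lemma min_wt4_C2 (x : F) : x != 0 -> ((x + 1) ^+ e + x ^+ e + 1 = 0 <-> x = 1).
Proof.
have e_even := min_wt4_even; have e_neq0 : e != 0%N by case: (e) e_gt1.
move=> x0; split=> [rel|->]; last by rewrite char3_two exprN_even // !expr1n char3_three.
apply/eqP/negPn/negP => x_neq1.
have x1_neq0 : x + 1 != 0.
  apply/eqP => x1_0; have def_x : x = -1 by apply/eqP; rewrite -addr_eq0 x1_0.
  move: rel; rewrite x1_0 expr0n (negbTE e_neq0) add0r def_x exprN_even // expr1n.
  by rewrite char3_two => /eqP; rewrite oppr_eq0 oner_eq0.
have [i def_x] := expr_alpha_surj x0.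
have [k def_y] : exists k : 'I_n, - (x + 1) = alpha ^+ k.
  by apply: expr_alpha_surj; rewrite oppr_eq0.
apply: (no_wt3_relation (ltn_ord i) n_gt0 (ltn_ord k) _ _ (oner_neq0 _) (b := 1) (c := 1)).
- by apply: contra_neq x_neq1; rewrite def_x => ->.
- apply: contra_neq x_neq1 => ik; have x_eq : x = - (x + 1) by rewrite {1}def_x ik -def_y.
  apply/eqP; rewrite -subr_eq0.
  have -> : x - 1 = - (x - - (x + 1)) + (1 + 1 + 1) * x by ring.
  by rewrite -x_eq subrr oppr0 char3_three mul0r addr0.
- by rewrite rmorph1 !mul1r -def_x -def_y expr0 subrr.
- by rewrite rmorph1 !mul1r -def_x -def_y expr0 expr1n exprN_even // -rel; ring.
Qed.

Lemma min_wt4_C3 (x : F) : (x + 1) ^+ e - x ^+ e - 1 = 0 <-> x = 0.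
Proof.
have e_even := min_wt4_even; have e_neq0 : e != 0%N by case: (e) e_gt1.
split=> [rel|->]; last by rewrite add0r expr1n expr0n (negbTE e_neq0) subr0 subrr.
apply/eqP/negPn/negP => x0.
have x1_neq0 : x + 1 != 0.
  apply/eqP => x1_0; have def_x : x = -1 by apply/eqP; rewrite -addr_eq0 x1_0.
  move: rel; rewrite x1_0 expr0n (negbTE e_neq0) sub0r def_x exprN_even // expr1n.
  by rewrite -opprD char3_two opprK => /eqP; rewrite oner_eq0.
have x_neq1 : x != 1.
  apply/eqP => x1; move: rel; rewrite x1 char3_two exprN_even // expr1n subrr sub0r.
  by move/eqP; rewrite oppr_eq0 oner_eq0.
have [i def_x] := expr_alpha_surj x0.
have [k def_y] := expr_alpha_surj x1_neq0.
apply: (no_wt3_relation (ltn_ord i) n_gt0 (ltn_ord k) _ _ (oner_neq0 _) (b := 1) (c := -1)).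
- by apply: contra_neq x_neq1; rewrite def_x => ->.
- apply/eqP => ik; have : x = x + 1 by rewrite {1}def_x ik -def_y.
  by move/eqP; rewrite -subr_eq0 opprD addrA subrr add0r oppr_eq0 oner_eq0.
- by rewrite rmorph1 rmorphN1 !mul1r mulN1r -def_x -def_y expr0 subrr.
- by rewrite rmorph1 rmorphN1 !mul1r mulN1r -def_x -def_y expr0 expr1n -oppr0 -rel; ring.
Qed.

End Necessity.

Lemma code_params_iff : has_params C (n - 2 * m) 4 <->
  [/\ ~~ odd e,
      (forall x : F, x != 0 -> ((x + 1) ^+ e + x ^+ e + 1 = 0 <-> x = 1)) &
      (forall x : F, (x + 1) ^+ e - x ^+ e - 1 = 0 <-> x = 0)].
Proof.
split=> [[_ _ min_dist]|[C1 C2 C3]].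
  have min_wt c : c \in C -> c != 0 -> (4 <= wt c)%N.
    by move=> cC c0; rewrite -(subr0 c) -hamming_dist_wt min_dist ?code0.
  by split; [exact: min_wt4_even | exact: min_wt4_C2 | exact: min_wt4_C3].
have min_wt := wt_code_ge4 C1 (fun x x0 => proj1 (C2 x x0)) (fun x => proj1 (C3 x)).
split; first exact: card_code.
  have [c [cC c0 wt_c]] := exists_wt_le4.
  exists c, 0; rewrite hamming_dist_wt subr0; split => //; first exact: code0.
  by apply/eqP; rewrite eqn_leq wt_c min_wt.
by move=> c1 c2 c1C c2C c12; rewrite hamming_dist_wt min_wt ?codeB // subr_eq0.
Qed.

End CyclicCode.

Theorem theorem1 (m : nat) (F : finFieldType) (alpha : F) (e : nat)
  (p1 pe : {poly 'F_3}) :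
  (0 < m)%N ->
  #|F| = (3 ^ m)%N ->
  (3 ^ m - 1)%N.-primitive_root alpha ->
  (1 < e)%N -> (e < 3 ^ m - 1)%N ->
  e \notin cyc_coset3 (3 ^ m - 1) 1 ->
  size (cyc_coset3 (3 ^ m - 1) e) = m ->
  is_minpoly3 alpha p1 ->
  is_minpoly3 (alpha ^+ e) pe ->
  has_params (cyclic_code (3 ^ m - 1) (p1 * pe)) (3 ^ m - 1 - 2 * m) 4
  <->
  [/\ ~~ odd e,
      (forall x : F, x != 0 -> ((x + 1) ^+ e + x ^+ e + 1 = 0 <-> x = 1)) &
      (forall x : F, (x + 1) ^+ e - x ^+ e - 1 = 0 <-> x = 0)].
Proof. exact: code_params_iff. Qed.
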